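(* With the notation below, for every $v\in\hat T\setminus\partial\hat T$, $$m_v=\theta\sum_{w:(v,w)\in\hat T}D_w^*\Big(\int f(x_w^\xi)\,dQ_w^+(\xi)-\int f(x_w^\xi)\,dQ_w^-(\xi)\Big),\qquad f(x)=\log\frac{\cosh(x/2)+\theta\sinh(x/2)}{\cosh(x/2)-\theta\sinh(x/2)}.$$
   Context: $T$ is a finite rooted tree (root $\rho$, leaves $\partial T$, $T_v$ the subtree of $v$ and its descendants), $\beta>0$, $\theta=\tanh\beta$, Ising Gibbs density $\propto\exp(\beta\sum_{uv}\sigma(u)\sigma(v))$, $\tau\in\{\pm1\}^{\partial T}$, and $\mu_v^\tau$ is the Gibbs measure on $T_v$ conditioned on $\tau$ on $\partial T\cap T_v$. $\hat T$ is a connected subtree of $T\setminus\partial T$ containing $\rho$ with leaves $\partial\hat T$, $\hat T_v=T_v\cap\hat T$; $\hat\mu_v^\xi$ is the Gibbs measure on $\hat T_v$ conditioned on $\xi\in\{\pm1\}^{\partial\hat T}$ on $\partial\hat T\cap\hat T_v$. $Q_v^{\pm}(\xi)=\mu_v^\tau(\sigma_{\partial\hat T_v}=\xi_{\partial\hat T_v}\mid\sigma(v)=\pm1)$; $x_v^\xi=\log\big(\hat\mu_v^\xi(\sigma(v)=1)/\hat\mu_v^\xi(\sigma(v)=-1)\big)$ (equal to $\pm\infty$ at leaves of $\hat T$); $m_v=\int x_v^\xi dQ_v^+-\int x_v^\xi dQ_v^-$; $x_w^*=\log\big(\mu_w^\tau(\sigma(w)=1)/\mu_w^\tau(\sigma(w)=-1)\big)$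 and $D_w^*=\cosh^2\beta/(\cosh^2\beta+\cosh^2(x_w^*/2)-1)$. *)

From HB Require Import structures.
From mathcomp Require Import all_boot.
From Stdlib Require Import Reals.
Set Implicit Arguments. Unset Strict Implicit. Unset Printing Implicit Defensive.
Local Open Scope R_scope.

Notation "\rsum_ ( i | P ) F" := (\big[Rplus/0%R]_(i | P) F%R)
  (at level 41, F at level 41, i at level 50).

(* Rooted tree on a finite vertex type V: root rho, parent map par with
   par rho = rho and every vertex reaching rho by iterating par.
   The edges are {w, par w} for w <> rho. *)
Definition is_rooted_tree (V : finType) (rho : V) (par : V -> V) : Prop :=
  par rho = rho /\ (forall v, exists k, iter k par v = rho).

Section Tree.
Variables (V : finType) (rho : V) (par : V -> V).

Definition child (v w : V) : bool := (w != rho) && (par w == v).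

(* w belongs to T_v (w is v or a descendant of v); a path from w up to v
   has length < #|V|. *)
Definition desc (v w : V) : bool := [exists k : 'I_#|V|, iter k par w == v].

Definition leafT (u : V) : bool := [forall w, ~~ child u w].

Definition leafHat (Th : {set V}) (u : V) : bool :=
  (u \in Th) && [forall w, ~~ (child u w && (w \in Th))].

(* Th is a connected subtree of T \ dT containing rho
   (in a rooted tree: contains rho and closed under taking parents) *)
Definition good_subtree (Th : {set V}) : Prop :=
  rho \in Th /\ (forall u, u \in Th -> ~~ leafT u) /\
  (forall u, u \in Th -> u != rho -> par u \in Th).

Definition spin (b : bool) : R := if b then 1%R else (-1)%R.

Definition config := {ffun V -> bool}.

(* Ising Gibbs measure on the vertex set S (a subtree with top vertex r),
   conditioned on sigma = eta on the boundary set B.  A configuration on S is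
   encoded as an element of config that equals true outside S. *)
Definition admissible (S B : pred V) (eta : V -> bool) (s : config) : bool :=
  [forall u, if S u then (B u ==> (s u == eta u)) else s u].

Definition weight (beta : R) (S : pred V) (r : V) (s : config) : R :=
  exp (beta * \rsum_(w | S w && (w != r)) (spin (s w) * spin (s (par w)))).

Definition gibbs (beta : R) (S : pred V) (r : V) (B : pred V)
    (eta : V -> bool) (E : pred config) : R :=
  (\rsum_(s | admissible S B eta s && E s) weight beta S r s) /
  (\rsum_(s | admissible S B eta s) weight beta S r s).

Variables (beta : R) (tau : V -> bool) (Th : {set V}).

Definition mu (v : V) (E : pred config) : R :=
  gibbs beta (desc v) v (fun u => desc v u && leafT u) tau E.

Definition dHat (v : V) : pred V := fun u => leafHat Th u && desc v u.

Definition Q (b : bool) (v : V) (xi : config) : R :=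
  mu v (fun s => (s v == b) && [forall u, dHat v u ==> (s u == xi u)]) /
  mu v (fun s => s v == b).

(* integral of g against a (signed) measure Q on {+-1}^{dHat_v} *)
Definition integ (v : V) (Qm : config -> R) (g : config -> R) : R :=
  \big[Rplus/0]_(xi : config | [forall u, dHat v u || xi u]) (g xi * Qm xi).

Definition muhat (v : V) (xi : V -> bool) (E : pred config) : R :=
  gibbs beta (fun u => desc v u && (u \in Th)) v (dHat v) xi E.

Definition xhat (v : V) (xi : config) : R :=
  ln (muhat v xi (fun s => s v) / muhat v xi (fun s => ~~ s v)).

(* extended reals, for x_v^xi = +-infinity at leaves of hat T *)
Inductive ER := Fin of R | PInf | NInf.

Definition xext (v : V) (xi : config) : ER :=
  if leafHat Th v then (if xi v then PInf else NInf) else Fin (xhat v xi).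

Definition m (v : V) : R :=
  integ v (Q true v) (xhat v) - integ v (Q false v) (xhat v).

Definition xstar (w : V) : R :=
  ln (mu w (fun s => s w) / mu w (fun s => ~~ s w)).

Definition Dstar (w : V) : R :=
  cosh beta ^ 2 / (cosh beta ^ 2 + cosh (xstar w / 2) ^ 2 - 1).

Definition theta : R := tanh beta.

Definition f (x : R) : R :=
  ln ((cosh (x / 2) + theta * sinh (x / 2)) / (cosh (x / 2) - theta * sinh (x / 2))).

(* f extended continuously to +-infinity: f(+-oo) = +- ln((1+theta)/(1-theta)) *)
Definition fext (x : ER) : R :=
  match x with
  | Fin r => f r
  | PInf => ln ((1 + theta) / (1 - theta))
  | NInf => - ln ((1 + theta) / (1 - theta))
  end.

End Tree.

(* All Gibbs quantities are ratios of restricted partition functions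
   Zroot S r B eta b G = sum over admissible configurations s of the region S
   with root spin s r = b of G s * weight s.  The proof rests on one
   combinatorial identity: if w is a child of the root r of S, the weight
   factorizes into the part outside T_w, the edge factor exp(beta s_w s_r)
   and the part inside T_w (split_at_child).  From it we get
   - the Markov decomposition of Zroot at v along a child w, for observables
     living in T_w (Ztree_child); together with an explicit real identity
     this gives, for every child w, the per-child formula
       int G dQ_v^+ - int G dQ_v^- = theta D*_w (int G dQ_w^+ - int G dQ_w^-);
   - the product formula of the hat partition function over the children of
     v, i.e. the BP recursion x_v^xi = sum_w f(x_w^xi), where f(+-oo) = +-2beta
     accounts for the leaves of hat T (xhat_recursion).
   The theorem follows by integrating the recursion against Q_v^+ - Q_v^-
   and applying the per-child formula to each summand. *)

From Pilot Require Import Defs.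
From Stdlib Require Import Reals Lra.
From HB Require Import structures.
From mathcomp Require Import all_boot.
Set Implicit Arguments. Unset Strict Implicit. Unset Printing Implicit Defensive.

Section TreeFacts.
Variables (V : finType) (rho : V) (par : V -> V).
Hypothesis Htree : is_rooted_tree rho par.

Let par_root : par rho = rho := proj1 Htree.

Lemma iter_cycle_root x n : iter n.+1 par x = x -> x = rho.
Proof.
move=> Hc; have [k Hk] := (proj2 Htree) x.
have Hm : forall m, iter (m * n.+1) par x = x.
  by elim=> [|m IH] //; rewrite mulSn iterD IH Hc.
rewrite -(Hm k) -(subnK (leq_pmulr k (ltn0Sn n))) iterD Hk iter_fix //.
Qed.

(* The path from any vertex to the root is shorter than #|V|, because the
   vertices on a shortest such path are pairwise distinct. *)
Lemma reach_root_bound u : exists2 k, k < #|V| & iter k par u = rho.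
Proof.
have ex : exists k, iter k par u == rho.
  by have [k Hk] := (proj2 Htree) u; exists k; apply/eqP.
case: (ex_minnP ex) => k0 /eqP Hk0 Hmin; exists k0 => //.
pose g (i : 'I_k0.+1) := iter i par u.
suff inj : injective g by have := leq_card g inj; rewrite card_ord.
move=> i j; rewrite /g => Hij; apply/val_inj => /=.
wlog lt : i j Hij / i <= j.
  by move=> W; case: (leqP i j) => h; [exact: W | symmetry; apply: W => //; apply: ltnW].
apply/eqP; rewrite eqn_leq lt /= leqNgt; apply/negP => ltij.
have hj : j <= k0 by rewrite -ltnS.
have : iter (k0 - (j - i)) par u == rho.
  have -> : k0 - (j - i) = (k0 - j) + i.
    by rewrite subnBA ?(ltnW ltij) // addnC -addnBA // addnC.
  by rewrite iterD Hij -iterD subnK // Hk0.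
move/Hmin; rewrite leqNgt ltn_subrL subn_gt0 ltij.
by rewrite (leq_ltn_trans (leq0n i) (leq_trans ltij hj)).
Qed.

Lemma descP w u : reflect (exists k, iter k par u = w) (desc par w u).
Proof.
apply: (iffP existsP) => [[k /eqP Hk]|[k Hk]]; first by exists k.
have [k0 lt0 H0] := reach_root_bound u.
case: (leqP k k0) => hk.
  by exists (Ordinal (leq_ltn_trans hk lt0)); apply/eqP.
exists (Ordinal lt0); apply/eqP => /=.
by rewrite H0 -Hk -(subnK (ltnW hk)) iterD H0 iter_fix.
Qed.

Lemma desc_refl w : desc par w w.
Proof. by apply/descP; exists 0. Qed.

Lemma desc_of_par w u : desc par w (par u) -> desc par w u.
Proof. by move/descP => [k Hk]; apply/descP; exists k.+1; rewrite iterSr. Qed.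

Lemma desc_trans a b c : desc par a b -> desc par b c -> desc par a c.
Proof.
move/descP => [i Hi] /descP [j Hj]; apply/descP; exists (i + j).
by rewrite iterD Hj.
Qed.

Lemma desc_par w u : desc par w u -> u != w -> desc par w (par u).
Proof.
move/descP => [[|k] Hk]; first by rewrite /= in Hk; rewrite Hk eqxx.
by move=> _; apply/descP; exists k; rewrite -iterSr.
Qed.

Lemma desc_root w : desc par w rho -> w = rho.
Proof. by move/descP => [k <-]; rewrite iter_fix. Qed.

Lemma desc_antisym a b : desc par a b -> desc par b a -> a = b.
Proof.
move/descP => [[|i] Hi] /descP [j Hj]; first by rewrite -Hi.
have : iter (i.+1 + j) par a = a by rewrite iterD Hj Hi.
by rewrite addSn => /iter_cycle_root Ha; rewrite -Hj Ha iter_fix.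
Qed.

Lemma desc_total a b u : desc par a u -> desc par b u -> desc par a b \/ desc par b a.
Proof.
move/descP => [i Hi] /descP [j Hj].
case: (leqP i j) => h.
  by right; apply/descP; exists (j - i); rewrite -Hi -iterD subnK.
by left; apply/descP; exists (i - j); rewrite -Hj -iterD subnK // ltnW.
Qed.

Lemma childP v w : child rho par v w -> par w = v /\ w != rho.
Proof. by move/andP => [h /eqP]. Qed.

Lemma child_desc v w : child rho par v w -> desc par v w.
Proof. by move/childP => [h _]; apply/descP; exists 1; rewrite /= h. Qed.

Lemma child_not_anc v w : child rho par v w -> ~~ desc par w v.
Proof.
move=> c; apply/negP => d; have [hp hr] := childP c.
have : iter 1 par w = w by rewrite /= hp (desc_antisym d (child_desc c)).
by move/iter_cycle_root => hw; rewrite hw eqxx in hr.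
Qed.

Lemma child_subtrees_disjoint v w1 w2 u : child rho par v w1 -> child rho par v w2 ->
  desc par w1 u -> desc par w2 u -> w1 = w2.
Proof.
have gen a b : child rho par v a -> child rho par v b -> desc par a b -> a = b.
  move=> ca cb dab; apply/eqP; apply/negP => /negP nab.
  have : desc par a (par b) by apply: desc_par => //; rewrite eq_sym.
  by rewrite (proj1 (childP cb)) (negbTE (child_not_anc ca)).
move=> c1 c2 d1 d2; case: (desc_total d1 d2) => h; first exact: gen.
by symmetry; apply: gen.
Qed.

Lemma desc_below_child v u : desc par v u -> u != v ->
  exists2 w, child rho par v w & desc par w u.
Proof.
move=> d nuv.
have ex : exists k, iter k par u == v by move/descP: d => [k Hk]; exists k; apply/eqP.
case: (ex_minnP ex) => -[|k] /eqP Hk Hmin; first by rewrite /= in Hk; rewrite Hk eqxx in nuv.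
exists (iter k par u); last by apply/descP; exists k.
apply/andP; split; last exact/eqP.
apply/negP => /eqP hr.
have : iter k par u == v by rewrite -Hk /= hr par_root.
by move/Hmin; rewrite ltnn.
Qed.

End TreeFacts.

Local Open Scope R_scope.

Lemma Rplus_assoc_law : associative Rplus.
Proof. by move=> x y z; rewrite Rplus_assoc. Qed.
Lemma Rmult_assoc_law : associative Rmult.
Proof. by move=> x y z; rewrite Rmult_assoc. Qed.
HB.instance Definition _ :=
  Monoid.isComLaw.Build R 0 Rplus Rplus_assoc_law Rplus_comm Rplus_0_l.
HB.instance Definition _ :=
  Monoid.isComLaw.Build R 1 Rmult Rmult_assoc_law Rmult_comm Rmult_1_l.
HB.instance Definition _ := Monoid.isMulLaw.Build R 0 Rmult Rmult_0_l Rmult_0_r.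
HB.instance Definition _ :=
  Monoid.isAddLaw.Build R Rmult Rplus Rmult_plus_distr_r Rmult_plus_distr_l.

Section ConfigSums.
Variable V : finType.
Implicit Types (s t : config V).

Definition glue (C : pred V) (s1 s2 : config V) : config V :=
  [ffun u => if C u then s2 u else s1 u].
Definition blank (C : pred V) (s : config V) : config V :=
  [ffun u => if C u then true else s u].

(* Fubini for a product of a factor depending only on the spins off C and a
   factor depending only on the spins on C: configurations are pairs of
   configurations off C and on C, each normalized to true on the other part. *)
Lemma sum_product_split (C : pred V) (P1 P2 : pred (config V))
    (F1 F2 : config V -> R) :
  (forall s t, (forall u, ~~ C u -> s u = t u) -> P1 s = P1 t /\ F1 s = F1 t) ->
  (forall s t, (forall u, C u -> s u = t u) -> P2 s = P2 t /\ F2 s = F2 t) ->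
  \rsum_(s | P1 s && P2 s) (F1 s * F2 s) =
  (\rsum_(s | P1 s && [forall u, C u ==> s u]) F1 s) *
  (\rsum_(s | P2 s && [forall u, ~~ C u ==> s u]) F2 s).
Proof.
move=> H1 H2.
have glue_off s1 s2 u : ~~ C u -> glue C s1 s2 u = s1 u.
  by move=> Cu; rewrite ffunE (negbTE Cu).
have glue_on s1 s2 u : C u -> glue C s1 s2 u = s2 u by move=> Cu; rewrite ffunE Cu.
rewrite (partition_big (blank C) (fun s => P1 s && [forall u, C u ==> s u])); last first.
  move=> s /andP[P1s _]; apply/andP; split.
    by rewrite (proj1 (H1 (blank C s) s _)) // => u Cu; rewrite ffunE (negbTE Cu).
  by apply/forallP => u; apply/implyP => Cu; rewrite ffunE Cu.
rewrite big_distrl /=; apply: eq_bigr => s1 /andP[P1s1 /forallP s1C].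
rewrite big_distrr /= (reindex_onto (glue C s1) (blank (predC C))); last first.
  by move=> s /andP[_ /eqP <-]; apply/ffunP => u; rewrite !ffunE /=; case: (C u).
apply: eq_big => [s2|s2 _]; last first.
  by rewrite (proj2 (H1 _ _ (glue_off s1 s2))) (proj2 (H2 _ _ (glue_on s1 s2))).
apply/idP/idP.
- move=> /andP[/andP[/andP[_ P2m] _] /eqP E].
  rewrite -(proj1 (H2 _ _ (glue_on s1 s2))) P2m /=.
  apply/forallP => u; apply/implyP => nCu.
  by move/ffunP: E => /(_ u); rewrite !ffunE /= nCu => <-.
- move=> /andP[P2s2 /forallP s2C].
  rewrite (proj1 (H1 _ _ (glue_off s1 s2))) (proj1 (H2 _ _ (glue_on s1 s2))) P1s1 P2s2 /=.
  apply/andP; split; apply/eqP/ffunP => u; rewrite !ffunE /=.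
    by case Cu: (C u) => //; have := s1C u; rewrite Cu.
  by case Cu: (C u) => //; have := s2C u; rewrite Cu.
Qed.

Lemma sum_pos (P : pred (config V)) (F : config V -> R) :
  (forall s, P s -> 0 < F s) -> (exists s, P s) -> 0 < \rsum_(s | P s) F s.
Proof.
move=> Hp [s0 Ps0]; rewrite (bigD1 s0) //=.
apply: Rplus_lt_le_0_compat; first exact: Hp.
apply: (big_ind (fun x => 0 <= x)); [lra | move=> x y; lra |].
by move=> s /andP[Ps _]; left; apply: Hp.
Qed.

End ConfigSums.

Lemma edge_factorE beta :
  (exp (beta * (spin true * spin true)) = exp beta) *
  (exp (beta * (spin false * spin false)) = exp beta) *
  (exp (beta * (spin true * spin false)) = exp (- beta)) *
  (exp (beta * (spin false * spin true)) = exp (- beta)).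
Proof. by rewrite /spin; do ! split; f_equal; ring. Qed.

Lemma cosh_half_ln_sq q : 0 < q -> cosh (ln q / 2) ^ 2 = (q + 2 + / q) / 4.
Proof.
move=> hq; rewrite /cosh exp_Ropp.
have hpa : 0 < exp (ln q / 2) by apply: exp_pos.
have ha : exp (ln q / 2) * exp (ln q / 2) = q.
  by rewrite -exp_plus (_ : ln q / 2 + ln q / 2 = ln q); [exact: exp_ln | field].
move: ha hpa; set a := exp (ln q / 2) => <- hpa; field; lra.
Qed.

(* The algebraic heart of the per-child formula: with z+- the partition
   functions of T_w with root spin +-1, a+- the same weighted by an
   observable G, and Y+- the partition functions of the rest of T_v, the
   difference of the conditional means of G at v is theta D*_w times the
   difference of the conditional means at w, where x*_w = ln(z+/z-). *)
Lemma child_increment_identity beta Yp Ym zp zm ap am :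
  0 < Yp -> 0 < Ym -> 0 < zp -> 0 < zm ->
  Yp * (exp beta * ap + exp (- beta) * am) / (Yp * (exp beta * zp + exp (- beta) * zm))
  - Ym * (exp (- beta) * ap + exp beta * am) / (Ym * (exp (- beta) * zp + exp beta * zm))
  = tanh beta * (cosh beta ^ 2 / (cosh beta ^ 2 + cosh (ln (zp / zm) / 2) ^ 2 - 1))
    * (ap / zp - am / zm).
Proof.
move=> hYp hYm hp hm.
rewrite cosh_half_ln_sq; last exact: Rdiv_lt_0_compat.
rewrite /tanh /sinh /cosh exp_Ropp; set E := exp beta.
have hE : 0 < E by apply: exp_pos.
have hEi : 0 < / E by apply: Rinv_0_lt_compat.
have h1 : 0 < E * zp + / E * zm by nra.
have h2 : 0 < / E * zp + E * zm by nra.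
have -> : ((E + / E) / 2) ^ 2 + (zp / zm + 2 + / (zp / zm)) / 4 - 1 =
          (E * zp + / E * zm) * (/ E * zp + E * zm) / (4 * zp * zm).
  by field; lra.
have hEE : 0 < E * E by nra.
have : 0 < E * zm * E by nra.
have : 0 < E * zp * E by nra.
by move=> ? ?; field; repeat split; lra.
Qed.

(* One step of belief propagation in log-ratio form: f maps the log-ratio
   x = ln(Z+/Z-) at a child to the log-ratio of its message to the parent. *)
Lemma bp_log_ratio beta Zp Zm : 0 < Zp -> 0 < Zm ->
  ln ((exp beta * Zp + exp (- beta) * Zm) / (exp (- beta) * Zp + exp beta * Zm))
  = Defs.f beta (ln (Zp / Zm)).
Proof.
move=> hp hm; rewrite /Defs.f /theta /tanh /sinh /cosh; f_equal; rewrite !exp_Ropp.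
set a := exp (ln (Zp / Zm) / 2).
have hA : 0 < a by apply: exp_pos.
have ha : a * a = Zp / Zm.
  rewrite /a -exp_plus (_ : ln (Zp / Zm) / 2 + ln (Zp / Zm) / 2 = ln (Zp / Zm)).
    by apply: exp_ln; apply: Rdiv_lt_0_compat.
  by field.
have -> : Zp = a * a * Zm by rewrite ha; field; lra.
set E := exp beta; have hE : 0 < E by apply: exp_pos.
have haa : 0 < a * a by nra.
have hEE : 0 < E * E by nra.
have : 0 < E * E * a * a by nra.
have : 0 < a * a * Zm by nra.
have : 0 < E * Zm * E by nra.
by move=> ? ? ?; field; repeat split; lra.
Qed.

(* The limits of f at +-oo are +-2beta. *)
Lemma f_at_infinity beta : ln ((1 + theta beta) / (1 - theta beta)) = 2 * beta.
Proof.
rewrite /theta /tanh /sinh /cosh exp_Ropp; set E := exp beta.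
have hE : 0 < E by apply: exp_pos.
rewrite -[RHS]ln_exp; congr ln.
by rewrite (_ : 2 * beta = beta + beta) ?exp_plus -/E; [field; nra | ring].
Qed.

Lemma ln_prod_ratio (I : Type) (r : seq I) (a b : I -> R) :
  (forall i, 0 < a i) -> (forall i, 0 < b i) ->
  ln (\big[Rmult/1]_(i <- r) a i / \big[Rmult/1]_(i <- r) b i) =
  \big[Rplus/0]_(i <- r) ln (a i / b i).
Proof.
move=> ha hb; elim: r => [|x r IH]; first by rewrite !big_nil /Rdiv Rinv_1 Rmult_1_l ln_1.
have prod_pos (c : I -> R) : (forall i, 0 < c i) -> 0 < \big[Rmult/1]_(i <- r) c i.
  by move=> hc; apply: (big_ind (fun x => 0 < x)) => //; [lra | exact: Rmult_lt_0_compat].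
have pa := prod_pos a ha; have pb := prod_pos b hb; have := ha x; have := hb x.
move=> hbx hax; rewrite !big_cons -IH -ln_mult; try exact: Rdiv_lt_0_compat.
by congr ln; field; lra.
Qed.

Lemma big_Rminus (I : finType) (P : pred I) (a b : I -> R) :
  \rsum_(i | P i) a i - \rsum_(i | P i) b i = \rsum_(i | P i) (a i - b i).
Proof.
rewrite /Rminus big_split /=; congr Rplus.
exact: (big_morph Ropp Ropp_plus_distr Ropp_0).
Qed.

Section Gibbs.
Variables (V : finType) (rho : V) (par : V -> V).
Hypothesis Htree : is_rooted_tree rho par.
Variable beta : R.
Implicit Types (S B C : pred V) (eta : V -> bool) (s t : config V).

Definition site_ok S B eta s u : bool :=
  if S u then (B u ==> (s u == eta u)) else s u.

Lemma admissible_ext S S' B B' eta eta' s :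
  (forall u, S u = S' u) -> (forall u, S u -> B u = B' u) ->
  (forall u, S u -> B u -> eta u = eta' u) ->
  admissible S B eta s = admissible S' B' eta' s.
Proof.
move=> hS hB he; apply: eq_forallb => u; rewrite -hS.
case Su: (S u) => //; rewrite -(hB u Su).
by case Bu: (B u) => //=; rewrite (he u Su Bu).
Qed.

Lemma admissible_inside S C B eta s :
  admissible (fun u => S u && C u) B eta s =
  [forall u, C u ==> site_ok S B eta s u] && [forall u, ~~ C u ==> s u].
Proof.
apply/forallP/andP => [h|[/forallP h1 /forallP h2] u].
  by split; apply/forallP => u; apply/implyP => Cu; have := h u;
    rewrite /site_ok ?Cu ?(negbTE Cu) ?andbT ?andbF.
by case: (boolP (C u)) => Cu; [have := h1 u | have := h2 u];
  rewrite /site_ok ?Cu ?(negbTE Cu) ?andbT ?andbF.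
Qed.

Lemma admissible_outside S C B eta s :
  admissible (fun u => S u && ~~ C u) B eta s =
  [forall u, ~~ C u ==> site_ok S B eta s u] && [forall u, C u ==> s u].
Proof.
rewrite admissible_inside; congr andb.
by apply: eq_forallb => u; rewrite negbK.
Qed.

Lemma admissible_split S C B eta s :
  admissible S B eta s =
  [forall u, ~~ C u ==> site_ok S B eta s u] && [forall u, C u ==> site_ok S B eta s u].
Proof.
apply/forallP/andP => [h|[/forallP h1 /forallP h2] u].
  by split; apply/forallP => u; apply/implyP => _; apply: h.
by case: (boolP (C u)) => Cu; [have := h2 u | have := h1 u]; rewrite Cu.
Qed.

Lemma weight_ext S S' r s : (forall u, S u = S' u) ->
  weight par beta S r s = weight par beta S' r s.
Proof. by move=> h; rewrite /weight; congr exp; congr Rmult; apply: eq_bigl => u; rewrite h. Qed.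

Lemma weight_local S r s t :
  (forall u, S u -> u != r -> s u = t u /\ s (par u) = t (par u)) ->
  weight par beta S r s = weight par beta S r t.
Proof.
move=> h; rewrite /weight; congr exp; congr Rmult; apply: eq_bigr => u /andP[Su nr].
by have [-> ->] := h u Su nr.
Qed.

Lemma weight_split_child S r w s :
  S w -> par w = r -> ~~ desc par w r ->
  weight par beta S r s =
  weight par beta (fun u => S u && ~~ desc par w u) r s *
  (exp (beta * (spin (s w) * spin (s r))) *
   weight par beta (fun u => S u && desc par w u) w s).
Proof.
move=> Sw pw nwr; rewrite /weight -!exp_plus; congr exp.
rewrite (bigID (desc par w)) /= Rmult_plus_distr_l Rplus_comm; congr Rplus.
  by congr (_ * _); apply: eq_bigl => u; rewrite andbAC.
rewrite -Rmult_plus_distr_l; congr Rmult.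
have wr : w != r by apply: contraNneq nwr => E; rewrite E; exact: (desc_refl Htree r).
rewrite (bigD1 w) /=; last by rewrite Sw wr (desc_refl Htree w).
rewrite pw; congr Rplus; apply: eq_bigl => u.
case: (boolP (desc par w u)) => du; rewrite ?andbF ?andbT //.
have -> // : u != r by apply: contraNneq nwr => <-.
by rewrite andbT.
Qed.

Definition Zroot S r B eta (b : bool) (G : config V -> R) : R :=
  \rsum_(s | admissible S B eta s && (s r == b)) (G s * weight par beta S r s).

Lemma Zroot_ext S S' r B B' eta b G :
  (forall u, S u = S' u) -> (forall u, S u -> B u = B' u) ->
  Zroot S r B eta b G = Zroot S' r B' eta b G.
Proof.
move=> hS hB; apply: eq_big => [s|s _]; last by rewrite (weight_ext _ _ hS).
by rewrite (@admissible_ext S S' B B' eta eta).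
Qed.

Lemma sum_by_root_spin S r B eta (h : bool -> R) G :
  \rsum_(s | admissible S B eta s) (h (s r) * G s * weight par beta S r s) =
  h true * Zroot S r B eta true G + h false * Zroot S r B eta false G.
Proof.
rewrite (bigID (fun s : config V => s r)) /= !big_distrr /=.
congr Rplus; apply: eq_big => s; rewrite ?eqb_id ?eqbF_neg //;
  by move=> /andP[_ sr]; rewrite ?sr ?(negbTE sr) Rmult_assoc.
Qed.

Lemma split_at_child S r w B eta b (g1 g2 : config V -> R) :
  S w -> par w = r -> ~~ desc par w r ->
  (forall s t, (forall u, ~~ desc par w u -> s u = t u) -> g1 s = g1 t) ->
  (forall s t, (forall u, desc par w u -> s u = t u) -> g2 s = g2 t) ->
  Zroot S r B eta b (fun s => g1 s * g2 s) =
  Zroot (fun u => S u && ~~ desc par w u) r B eta b g1 *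
  (exp (beta * (spin true * spin b)) * Zroot (fun u => S u && desc par w u) w B eta true g2 +
   exp (beta * (spin false * spin b)) * Zroot (fun u => S u && desc par w u) w B eta false g2).
Proof.
move=> Sw pw nwr hg1 hg2.
set S1 := fun u => S u && ~~ desc par w u.
set D := fun u => S u && desc par w u.
rewrite -(@sum_by_root_spin D w B eta (fun c => exp (beta * (spin c * spin b))) g2) /Zroot.
rewrite (eq_bigr (fun s => (g1 s * weight par beta S1 r s) *
   (exp (beta * (spin (s w) * spin b)) * g2 s * weight par beta D w s))); last first.
  by move=> s /andP[_ /eqP sr]; rewrite (weight_split_child s Sw pw nwr) sr /S1 /D; ring.
rewrite (eq_bigl (fun s => ([forall u, ~~ desc par w u ==> site_ok S B eta s u] && (s r == b))
   && [forall u, desc par w u ==> site_ok S B eta s u])); last first.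
  by move=> s; rewrite (admissible_split _ (desc par w)) andbAC.
(* Both factors are local: the first sees only spins off T_w (r included),
   the second only spins in T_w. *)
rewrite [LHS](@sum_product_split _ (desc par w)) => [|s t h|s t h].
- congr Rmult; apply: eq_bigl => s; first by rewrite admissible_outside andbAC.
  by rewrite admissible_inside.
- rewrite (h r nwr); split.
    by congr andb; apply: eq_forallb => u;
      case: (boolP (desc par w u)) => //= du; rewrite /site_ok h.
  rewrite (hg1 s t h); congr Rmult; apply: weight_local => u /andP[_ du] _.
  by split; apply: h => //; apply/negP => /(desc_of_par Htree); exact/negP.
- split; first by apply: eq_forallb => u;
    case: (boolP (desc par w u)) => //= du; rewrite /site_ok h.
  rewrite (h w (desc_refl Htree w)) (hg2 s t h); congr Rmult.
  apply: weight_local => u /andP[_ du] nuw; split; first exact: h.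
  by apply: h; apply: (desc_par Htree).
Qed.

Definition witness S B eta (c : bool) : config V :=
  [ffun u => if S u then (if B u then eta u else c) else true].

Lemma witness_admissible S B eta c : admissible S B eta (witness S B eta c).
Proof. by apply/forallP => u; rewrite !ffunE; case: (S u); case: (B u) => /=. Qed.

Lemma Zroot_pos S r B eta b : S r -> ~~ B r -> 0 < Zroot S r B eta b (fun _ => 1).
Proof.
move=> Sr nB; apply: sum_pos => [s _|]; first by rewrite Rmult_1_l; apply: exp_pos.
exists (witness S B eta b).
by rewrite witness_admissible ffunE Sr (negbTE nB) eqxx.
Qed.

Lemma Zroot_unitE S r B eta b :
  Zroot S r B eta b (fun _ => 1) =
  \rsum_(s | admissible S B eta s && (s r == b)) weight par beta S r s.
Proof. by apply: eq_bigr => s _; rewrite Rmult_1_l. Qed.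

Lemma gibbs_ratio S r B eta (E1 E2 : pred (config V)) :
  \rsum_(s | admissible S B eta s && E2 s) weight par beta S r s <> 0 ->
  gibbs par beta S r B eta E1 / gibbs par beta S r B eta E2 =
  (\rsum_(s | admissible S B eta s && E1 s) weight par beta S r s) /
  (\rsum_(s | admissible S B eta s && E2 s) weight par beta S r s).
Proof.
move=> h; rewrite /gibbs.
have : 0 < \rsum_(s | admissible S B eta s) weight par beta S r s.
  apply: sum_pos => [s _|]; first exact: exp_pos.
  by exists (witness S B eta true); rewrite witness_admissible.
by move=> hd; field; split => //; lra.
Qed.

Lemma gibbs_log_odds S r B eta : S r -> ~~ B r ->
  ln (gibbs par beta S r B eta (fun s => s r) / gibbs par beta S r B eta (fun s => ~~ s r)) =
  ln (Zroot S r B eta true (fun _ => 1) / Zroot S r B eta false (fun _ => 1)).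
Proof.
move=> Sr nB.
have hT : \rsum_(s | admissible S B eta s && s r) weight par beta S r s =
          Zroot S r B eta true (fun _ => 1).
  by rewrite Zroot_unitE; apply: eq_bigl => s; rewrite eqb_id.
have hF : \rsum_(s | admissible S B eta s && ~~ s r) weight par beta S r s =
          Zroot S r B eta false (fun _ => 1).
  by rewrite Zroot_unitE; apply: eq_bigl => s; rewrite eqbF_neg.
have nz : \rsum_(s | admissible S B eta s && ~~ s r) weight par beta S r s <> 0.
  by rewrite hF; have := Zroot_pos eta false Sr nB; lra.
by rewrite (gibbs_ratio _ nz) hT hF.
Qed.

Lemma boundary_sum_collapse S B r eta (K : pred V) (b : bool) (G : config V -> R) :
  (forall s t, (forall u, K u -> s u = t u) -> G s = G t) ->
  \big[Rplus/0]_(xi : config V | [forall u, K u || xi u])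
     (G xi * \rsum_(s | admissible S B eta s &&
                 ((s r == b) && [forall u, K u ==> (s u == xi u)])) weight par beta S r s)
  = Zroot S r B eta b G.
Proof.
move=> hG; under eq_bigr do rewrite big_distrr.
rewrite (exchange_big_dep (fun s => admissible S B eta s && (s r == b))) /=; last first.
  by move=> xi s _ /andP[-> /andP[-> _]].
apply: eq_bigr => s /andP[adm sr].
pose xs : config V := [ffun u => if K u then s u else true].
rewrite (big_pred1 xs) /=.
  by congr Rmult; apply: hG => u Ku; rewrite ffunE Ku.
move=> xi /=; rewrite adm sr /=.
apply/andP/eqP => [[/forallP h1 /forallP h2]|->].
  apply/ffunP => u; rewrite ffunE.
  by case Ku: (K u); [have := h2 u; rewrite Ku => /eqP | have := h1 u; rewrite Ku].
by split; apply/forallP => u; rewrite ffunE; case: (K u) => //=.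
Qed.

End Gibbs.

Section SubtreeMeasures.
Variables (V : finType) (rho : V) (par : V -> V).
Hypothesis Htree : is_rooted_tree rho par.
Variables (beta : R) (tau : V -> bool) (Th : {set V}).
Implicit Types (s t : config V).

Definition leaves_below (u : V) : pred V := fun x => desc par u x && leafT rho par x.

Definition Ztree (u : V) (b : bool) (G : config V -> R) : R :=
  Zroot par beta (desc par u) u (leaves_below u) tau b G.

Lemma Ztree_pos u b : ~~ leafT rho par u -> 0 < Ztree u b (fun _ => 1).
Proof.
move=> nl; apply: Zroot_pos; first exact: desc_refl Htree u.
by rewrite /leaves_below (negbTE nl) andbF.
Qed.

Lemma integ_Q_ratio u b (G : config V -> R) : ~~ leafT rho par u ->
  (forall s t, (forall x, dHat rho par Th u x -> s x = t x) -> G s = G t) ->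
  integ rho par Th u (Q rho par beta tau Th b u) G = Ztree u b G / Ztree u b (fun _ => 1).
Proof.
move=> nl hG; have hN := Ztree_pos b nl.
rewrite /integ /Q /mu -/(leaves_below u).
have hNz : \rsum_(s | admissible (desc par u) (leaves_below u) tau s && (s u == b))
            weight par beta (desc par u) u s <> 0.
  by rewrite -Zroot_unitE -/(Ztree u b (fun _ => 1)); lra.
under eq_bigr => xi _ do rewrite (gibbs_ratio _ hNz) -Zroot_unitE /Rdiv -Rmult_assoc.
by rewrite -big_distrl /= boundary_sum_collapse.
Qed.

Lemma xstar_log_ratio w : ~~ leafT rho par w ->
  xstar rho par beta tau w = ln (Ztree w true (fun _ => 1) / Ztree w false (fun _ => 1)).
Proof.
move=> nl; apply: gibbs_log_odds; first exact: desc_refl Htree w.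
by rewrite /leaves_below (negbTE nl) andbF.
Qed.

Definition Zrest (v w : V) (b : bool) : R :=
  Zroot par beta (fun x => desc par v x && ~~ desc par w x) v (leaves_below v) tau b
    (fun _ => 1).

Lemma Ztree_child v w b (G : config V -> R) : child rho par v w ->
  (forall s t, (forall x, desc par w x -> s x = t x) -> G s = G t) ->
  Ztree v b G = Zrest v w b *
    (exp (beta * (spin true * spin b)) * Ztree w true G +
     exp (beta * (spin false * spin b)) * Ztree w false G).
Proof.
move=> cvw hG; have [pw _] := childP cvw.
have dwv x : desc par w x -> desc par v x.
  exact/(desc_trans Htree)/(child_desc Htree).
have inT x : (desc par v x && desc par w x) = desc par w x.
  by apply/andP/idP => [[]//|dx]; rewrite dwv.
have -> : Ztree v b G = Ztree v b (fun s => 1 * G s).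
  by apply: eq_bigr => s _; rewrite Rmult_1_l.
rewrite /Ztree (@split_at_child _ _ _ Htree beta _ v w _ tau b (fun _ => 1) G
  (child_desc Htree cvw) pw (child_not_anc Htree cvw)) //.
by rewrite !(@Zroot_ext _ _ _ (fun x => desc par v x && desc par w x) (desc par w)
  _ (leaves_below v) (leaves_below w)) // => x; rewrite inT // => dx;
  rewrite /leaves_below dx dwv.
Qed.

Lemma per_child_formula v w (G : config V -> R) : child rho par v w ->
  ~~ leafT rho par v -> ~~ leafT rho par w ->
  (forall s t, (forall x, dHat rho par Th w x -> s x = t x) -> G s = G t) ->
  integ rho par Th v (Q rho par beta tau Th true v) G -
  integ rho par Th v (Q rho par beta tau Th false v) G
  = theta beta * Dstar rho par beta tau w *
    (integ rho par Th w (Q rho par beta tau Th true w) G -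
     integ rho par Th w (Q rho par beta tau Th false w) G).
Proof.
move=> cvw nlv nlw hG.
have dwv x : desc par w x -> desc par v x.
  exact/(desc_trans Htree)/(child_desc Htree).
have hGv s t : (forall x, dHat rho par Th v x -> s x = t x) -> G s = G t.
  by move=> h; apply: hG => x /andP[lx dx]; apply: h; rewrite /dHat lx dwv.
have hGw s t : (forall x, desc par w x -> s x = t x) -> G s = G t.
  by move=> h; apply: hG => x /andP[_ dx]; exact: h.
rewrite !integ_Q_ratio // !(Ztree_child _ cvw hGw) !(Ztree_child _ cvw (G := fun _ => 1)) //.
have hY b : 0 < Zrest v w b.
  apply: Zroot_pos; first by rewrite (desc_refl Htree) (child_not_anc Htree cvw).
  by rewrite /leaves_below (negbTE nlv) andbF.
rewrite /Dstar (xstar_log_ratio nlw) /theta !edge_factorE.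
by apply: child_increment_identity => //; apply: Ztree_pos.
Qed.

End SubtreeMeasures.

Section HatTree.
Variables (V : finType) (rho : V) (par : V -> V).
Hypothesis Htree : is_rooted_tree rho par.
Variables (beta : R) (Th : {set V}).
Hypothesis HTh : good_subtree rho par Th.
Implicit Types (s t xi : config V).

Lemma hat_anc_closed u a : u \in Th -> desc par a u -> a \in Th.
Proof.
move=> uT /(descP Htree) [k <-]; elim: k => [|k IH] //=.
case: (eqVneq (iter k par u) rho) => h; first by rewrite h (proj1 Htree) -h.
exact: (proj2 (proj2 HTh)).
Qed.

Lemma hat_not_leafT u : u \in Th -> ~~ leafT rho par u.
Proof. exact: (proj1 (proj2 HTh)). Qed.

Definition hatT (u : V) : pred V := fun x => desc par u x && (x \in Th).

Lemma hatT_leaf w : w \in Th -> leafHat rho par Th w -> forall x, hatT w x = (x == w).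
Proof.
move=> wT lw x; rewrite /hatT.
case: (eqVneq x w) => [->|nxw]; first by rewrite (desc_refl Htree) wT.
apply/negP => /andP[dx xT]; have [c cwc dcx] := desc_below_child Htree dx nxw.
move/andP: lw => [_ /forallP /(_ c)].
by rewrite cwc (hat_anc_closed xT dcx).
Qed.

Definition Zhat (u : V) xi (b : bool) : R :=
  Zroot par beta (hatT u) u (dHat rho par Th u) xi b (fun _ => 1).

Lemma Zhat_pos u xi b : u \in Th -> ~~ leafHat rho par Th u -> 0 < Zhat u xi b.
Proof.
move=> uT nl; apply: Zroot_pos; first by rewrite /hatT (desc_refl Htree) uT.
by rewrite /dHat (negbTE nl).
Qed.

Lemma xhat_log_ratio u xi : u \in Th -> ~~ leafHat rho par Th u ->
  xhat rho par beta Th u xi = ln (Zhat u xi true / Zhat u xi false).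
Proof.
move=> uT nl; apply: gibbs_log_odds; first by rewrite /hatT (desc_refl Htree) uT.
by rewrite /dHat (negbTE nl).
Qed.

Lemma Zhat_leaf w xi b : w \in Th -> leafHat rho par Th w ->
  Zhat w xi b = if xi w == b then 1 else 0.
Proof.
move=> wT lw; have e := hatT_leaf wT lw.
have Bw : dHat rho par Th w w by rewrite /dHat lw (desc_refl Htree).
pose sw : config V := [ffun u => if u == w then xi w else true].
have adm s : admissible (hatT w) (dHat rho par Th w) xi s = (s == sw).
  apply/forallP/eqP => [h|-> u]; last by rewrite !ffunE e; case: eqP => [->|] //=; rewrite Bw eqxx.
  apply/ffunP => u; rewrite ffunE; have := h u; rewrite e.
  by case: eqP => [->|] //=; rewrite Bw => /eqP.
rewrite /Zhat /Zroot (eq_bigl (fun s => (s == sw) && (xi w == b))); last first.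
  by move=> s; rewrite adm; case: eqP => [->|]; rewrite ?ffunE ?eqxx.
case: (xi w == b); last by rewrite big_pred0 // => s; rewrite andbF.
rewrite (big_pred1 sw) => [|s]; last by rewrite andbT.
rewrite Rmult_1_l /weight big_pred0 ?Rmult_0_r ?exp_0 // => x.
by rewrite e; case: eqP => //= ->; rewrite eqxx.
Qed.

Definition message (w : V) xi (b : bool) : R :=
  exp (beta * (spin true * spin b)) * Zhat w xi true +
  exp (beta * (spin false * spin b)) * Zhat w xi false.

Lemma message_pos w xi b : 0 < message w xi b.
Proof.
rewrite /message /Zhat -(sum_by_root_spin par beta (hatT w) w (dHat rho par Th w) xi
  (fun c => exp (beta * (spin c * spin b)))); apply: sum_pos => [s _|].
  by rewrite Rmult_1_r; apply: Rmult_lt_0_compat; apply: exp_pos.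
by exists (witness (hatT w) (dHat rho par Th w) xi true); rewrite witness_admissible.
Qed.

Lemma message_log_ratio w xi : w \in Th ->
  ln (message w xi true / message w xi false) = fext beta (xext rho par beta Th w xi).
Proof.
move=> wT; rewrite /message /xext !edge_factorE.
case: (boolP (leafHat rho par Th w)) => lw.
  rewrite !Zhat_leaf //; case: (xi w) => /=; rewrite f_at_infinity;
    rewrite !Rmult_1_r !Rmult_0_r ?Rplus_0_r ?Rplus_0_l;
    rewrite /Rdiv -exp_Ropp -exp_plus ln_exp; ring.
rewrite (xhat_log_ratio _ wT lw); apply: bp_log_ratio; exact: Zhat_pos.
Qed.

Lemma xext_local w s t : (forall x, dHat rho par Th w x -> s x = t x) ->
  xext rho par beta Th w s = xext rho par beta Th w t.
Proof.
move=> h; rewrite /xext; case: (boolP (leafHat rho par Th w)) => lw.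
  by rewrite h // /dHat lw (desc_refl Htree).
have hadm c : admissible (hatT w) (dHat rho par Th w) s c =
              admissible (hatT w) (dHat rho par Th w) t c.
  by apply: admissible_ext => // x _; exact: h.
have hmu E : muhat rho par beta Th w s E = muhat rho par beta Th w t E.
  by rewrite /muhat /gibbs; congr (_ / _); apply: eq_bigl => c; rewrite -/(hatT w) hadm.
by rewrite /xhat !hmu.
Qed.

(* Product formula over the children of v in hat T: removing the subtrees
   hat T_w of the children w in ws from hat T_v one at a time. *)
Section Pruning.
Variables (v : V) (xi : config V).
Hypotheses (Hv : v \in Th) (Hvnl : ~~ leafHat rho par Th v).

Definition hat_child (w : V) : bool := child rho par v w && (w \in Th).

Definition pruned (ws : seq V) : pred V :=
  fun u => hatT v u && all (fun w => ~~ desc par w u) ws.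

Definition Zpruned (ws : seq V) (b : bool) : R :=
  Zroot par beta (pruned ws) v (dHat rho par Th v) xi b (fun _ => 1).

Lemma Zpruned_step ws w b : hat_child w -> w \notin ws -> all hat_child ws ->
  Zpruned ws b = Zpruned (rcons ws w) b * message w xi b.
Proof.
move=> /andP[cw wT] nw aws; have [pw _] := childP cw.
have dwv x : desc par w x -> desc par v x.
  exact/(desc_trans Htree)/(child_desc Htree).
have disj x w' : w' \in ws -> desc par w x -> ~~ desc par w' x.
  move=> w'in dx; apply/negP => dx'; have /andP[c' _] := allP aws w' w'in.
  by have e := child_subtrees_disjoint Htree cw c' dx dx'; subst w'; rewrite w'in in nw.
have Sw : pruned ws w.
  rewrite /pruned /hatT (child_desc Htree cw) wT /=; apply/allP => w' w'in.
  exact: (disj _ _ w'in (desc_refl Htree w)).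
have inT x : (pruned ws x && desc par w x) = hatT w x.
  rewrite /pruned /hatT; case: (boolP (desc par w x)) => dx; rewrite ?andbF //.
  rewrite andbT (dwv x dx) /=; case: (x \in Th) => //=.
  by apply/allP => w' w'in; exact: disj.
have -> : Zpruned ws b = Zroot par beta (pruned ws) v (dHat rho par Th v) xi b
    (fun _ => 1 * 1) by apply: eq_bigr => s _; rewrite !Rmult_1_l.
rewrite (@split_at_child _ _ _ Htree beta _ v w _ xi b (fun _ => 1) (fun _ => 1)
  Sw pw (child_not_anc Htree cw)) //.
congr Rmult.
  by apply: Zroot_ext => // u; rewrite /pruned all_rcons andbA andbAC.
by rewrite /message /Zhat !(@Zroot_ext _ _ _ _ (hatT w) _ _ (dHat rho par Th w)) //
  => x; rewrite inT // => /andP[dx _]; rewrite /dHat dx (dwv x dx).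
Qed.

Lemma Zpruned_prod ws0 ws b : uniq (ws0 ++ ws) -> all hat_child (ws0 ++ ws) ->
  Zpruned ws0 b = Zpruned (ws0 ++ ws) b * \big[Rmult/1]_(w <- ws) message w xi b.
Proof.
elim: ws ws0 => [|w ws IH] ws0 hu ha; first by rewrite cats0 big_nil Rmult_1_r.
have hw : w \notin ws0.
  by move: hu; rewrite cat_uniq /= => /and3P[_ /norP[h _] _].
have ha0 : all hat_child ws0 by move: ha; rewrite all_cat => /andP[].
have hiw : hat_child w by move: ha; rewrite all_cat /= => /and3P[].
rewrite (Zpruned_step b hiw hw ha0) big_cons (IH (rcons ws0 w)) ?cat_rcons //.
by ring.
Qed.

Lemma Zpruned_all cs b : (forall w, hat_child w -> w \in cs) -> all hat_child cs ->
  Zpruned cs b = 1.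
Proof.
move=> hall hcs.
have e x : pruned cs x = (x == v).
  rewrite /pruned /hatT; case: (eqVneq x v) => [->|nxv].
    rewrite (desc_refl Htree) Hv /=; apply/allP => w /(allP hcs) /andP[c _].
    exact: (child_not_anc Htree).
  apply/negP => /andP[/andP[dx xT] /allP al].
  have [c cvc dcx] := desc_below_child Htree dx nxv.
  have cin : c \in cs by apply: hall; rewrite /hat_child cvc (hat_anc_closed xT dcx).
  by have := al c cin; rewrite dcx.
rewrite /Zpruned (@Zroot_ext _ _ _ _ (pred1 v) _ _ (dHat rho par Th v)) // /Zroot.
pose sb : config V := [ffun u => if u == v then b else true].
rewrite (big_pred1 sb) => [|s].
  by rewrite Rmult_1_l /weight big_pred0 ?Rmult_0_r ?exp_0 // => x; rewrite /= andbN.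
apply/andP/eqP => [[/forallP h /eqP sv]|->].
  apply/ffunP => u; rewrite ffunE.
  by case: eqP => [->|/eqP nuv] //; have := h u; rewrite /= (negbTE nuv).
split; last by rewrite ffunE eqxx.
apply/forallP => u; rewrite /= !ffunE.
by case: (eqVneq u v) => [->|//]; rewrite /dHat (negbTE Hvnl).
Qed.

Lemma xhat_recursion :
  xhat rho par beta Th v xi =
  \rsum_(w | child rho par v w && (w \in Th)) fext beta (xext rho par beta Th w xi).
Proof.
pose cs := [seq w <- index_enum V | hat_child w].
have ucs : uniq cs by apply: filter_uniq; exact: index_enum_uniq.
have acs : all hat_child cs by apply: filter_all.
have mcs w : hat_child w -> w \in cs by move=> iw; rewrite mem_filter iw mem_index_enum.
have hZ b : Zhat v xi b = \big[Rmult/1]_(w <- cs) message w xi b.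
  rewrite /Zhat (@Zroot_ext _ _ _ _ (pruned [::]) _ _ (dHat rho par Th v)) => [|u|//];
    last by rewrite /pruned andbT.
  by rewrite -/(Zpruned [::] b) (Zpruned_prod (ws0 := [::]) (ws := cs)) // Zpruned_all // Rmult_1_l.
rewrite (xhat_log_ratio _ Hv Hvnl) !hZ ln_prod_ratio => [|w|w]; try exact: message_pos.
rewrite big_filter; apply: eq_bigr => w /andP[_ wT]; exact: message_log_ratio.
Qed.

End Pruning.

End HatTree.

Theorem mainTheorem9 (V : finType) (rho : V) (par : V -> V)
  (Htree : is_rooted_tree rho par)
  (beta : R) (Hbeta : (0 < beta)%R) (tau : V -> bool) (Th : {set V})
  (HTh : good_subtree rho par Th)
  (v : V) (Hv : v \in Th) (Hvnl : ~~ leafHat rho par Th v) :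
  m rho par beta tau Th v =
  (theta beta *
   \rsum_(w | child rho par v w && (w \in Th))
     (Dstar rho par beta tau w *
      (integ rho par Th w (Q rho par beta tau Th true w)
             (fun xi => fext beta (xext rho par beta Th w xi))
     - integ rho par Th w (Q rho par beta tau Th false w)
             (fun xi => fext beta (xext rho par beta Th w xi)))))%R.
Proof.
have integ_recursion b :
    integ rho par Th v (Q rho par beta tau Th b v) (xhat rho par beta Th v) =
    \rsum_(w | child rho par v w && (w \in Th))
      integ rho par Th v (Q rho par beta tau Th b v)
        (fun xi => fext beta (xext rho par beta Th w xi)).
  rewrite /integ -exchange_big; apply: eq_bigr => xi _.
  by rewrite (xhat_recursion Htree beta HTh xi Hv Hvnl) big_distrl.
rewrite /m !integ_recursion big_Rminus big_distrr.
apply: eq_bigr => w /andP[cw wT] /=.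
rewrite (per_child_formula Htree beta tau cw (hat_not_leafT HTh Hv)
  (hat_not_leafT HTh wT)) => [|s t h]; first ring.
by rewrite (xext_local Htree beta h).
Qed.
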